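(* Let $p\ge2$ and $n,\ell,t$ be positive integers. Every $t$-tandem-duplication-correcting code $\mathcal{C}\subseteq\mathbb{Z}_p^n$ with respect to duplication length $\ell$ satisfies $$|\mathcal{C}|\le\frac{t!}{(n+(t-1)\ell)^t}\cdot\frac{p^{n+t(\ell+1)}}{(p-1)^t}.$$
   Context: $\mathbb{Z}_p=\{0,1,\dots,p-1\}$ with arithmetic mod $p$. For a word $\mathbf{x}$ over $\mathbb{Z}_p$ and $0\le i\le|\mathbf{x}|-\ell$, write $\mathbf{x}=\mathbf{u}\mathbf{v}\mathbf{w}$ with $|\mathbf{u}|=i$, $|\mathbf{v}|=\ell$; the tandem duplication of length $\ell$ at position $i$ produces $\mathbf{u}\mathbf{v}\mathbf{v}\mathbf{w}$. The ball $B_t^{\tau_\ell}(\mathbf{x})$ is the set of words obtainable from $\mathbf{x}$ by at most $t$ successive tandem duplications of length $\ell$. A code $\mathcal{C}\subseteq\mathbb{Z}_p^n$ is $t$-tandem-duplication-correcting (duplication length $\ell$) if $B_t^{\tau_\ell}(\mathbf{c})\cap B_t^{\tau_\ell}(\mathbf{c}')=\emptyset$ for all distinct $\mathbf{c},\mathbf{c}'\in\mathcal{C}$. *)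

From mathcomp Require Import all_boot all_order all_algebra.
Set Implicit Arguments. Unset Strict Implicit. Unset Printing Implicit Defensive.

(* tandem duplication of length l at position i: x = u v w, |u| = i, |v| = l,
   result u v v w *)
Definition tdup (T : Type) (l i : nat) (x : seq T) : seq T :=
  take i x ++ take l (drop i x) ++ drop i x.

Definition dup_step (T : Type) (l : nat) (x y : seq T) : Prop :=
  exists i, (i + l <= size x)%N /\ y = tdup l i x.

Fixpoint tball (T : Type) (l t : nat) (x : seq T) (y : seq T) : Prop :=
  match t with
  | 0 => y = x
  | t'.+1 => tball l t' x y \/ exists z, tball l t' x z /\ dup_step l z y
  end.

Definition tdup_correcting (p n l t : nat) (C : {set n.-tuple 'I_p}) : Prop :=
  forall c c' : n.-tuple 'I_p, c \in C -> c' \in C -> c != c' ->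
    forall y : seq 'I_p, ~ (tball l t (val c) y /\ tball l t (val c') y).

(* Encode a word y by its difference pattern, the bits [y_j != y_(j+l)].  A
   tandem duplication of length l inserts l zeros into the pattern, so it
   preserves the number of ones, the weight of y.  The t blocks of zeros can be
   inserted into a pattern with w ones in C(w+t,t) ways with distinct results,
   so the radius-t ball of a codeword of weight w contains C(w+t,t) words of
   length n+tl, all of weight w.  Giving each word y of that length the mass
   1/C(weight y + t, t), every ball carries mass at least 1; the balls of a
   code are disjoint, so |C| is at most the total mass.  There are p^l C(m,k) (p-1)^k
   words of length m+l and weight k (m = n+(t-1)l), and the identity
   C(m,k)/C(k+t,t) = C(m+t,k+t)/C(m+t,t) turns the total mass into a tail of the
   binomial expansion of p^(m+t), whence the bound via t! C(m+t,t) >= m^t.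
   When n < l no duplication applies and |C| <= p^n <= p^l is below the mass. *)

From mathcomp Require Import all_boot all_order all_algebra.
From mathcomp Require Import zify ring.
From Stdlib Require Import ClassicalEpsilon.
Set Implicit Arguments. Unset Strict Implicit. Unset Printing Implicit Defensive.
Import Order.TTheory GRing.Theory Num.Theory.

Section ZeroInsertion.
Variable l : nat.

Definition ins_zeros (i : nat) (d : seq bool) := take i d ++ nseq l false ++ drop i d.

Fixpoint reach_zeros (s : nat) (d e : seq bool) : Prop :=
  match s with
  | 0 => e = d
  | s'.+1 => exists e' i, [/\ reach_zeros s' d e', i <= size e' & e = ins_zeros i e']
  end.

Lemma count_reach_zeros s d e : reach_zeros s d e -> count id e = count id d.
Proof.
elim: s e => [e -> //|s IH e [e' [i [/IH <- _ ->]]]].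
by rewrite !count_cat count_nseq mul0n -count_cat cat_take_drop.
Qed.

Lemma reach_zeros_cons b s d e :
  reach_zeros s d e -> reach_zeros s (b :: d) (b :: e).
Proof.
elim: s e => [e -> //|s IH e [e' [i [/IH r_e' le_i ->]]]].
by exists (b :: e'), i.+1.
Qed.

Lemma reach_zeros_front s d e :
  reach_zeros s d e -> reach_zeros s.+1 d (nseq l false ++ e).
Proof. by move=> r_e; exists e, 0; rewrite /ins_zeros take0 drop0. Qed.

Lemma reach_zeros_nil s : reach_zeros s [::] (nseq (s * l) false).
Proof.
elim: s => [//|s IH]; rewrite mulSn nseqD; exact: reach_zeros_front.
Qed.

Lemma reach_zeros_uniq_seq d s : 0 < l -> exists E : seq (seq bool),
  [/\ uniq E, size E = 'C(count id d + s, s) & forall e, e \in E -> reach_zeros s d e].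
Proof.
move=> l_gt0; elim: d s => [|[] d IHd] s.
- exists [:: nseq (s * l) false]; rewrite binn; split=> // e.
  by rewrite inE => /eqP ->; apply: reach_zeros_nil.
- (* Pascal's rule: either a block goes in front of the leading 1, or all s
     blocks go into d. *)
  elim: s => [|s IHs].
    by exists [:: true :: d]; rewrite bin0; split=> // e; rewrite inE => /eqP ->.
  have [E1 [uE1 sE1 rE1]] := IHs; have [E2 [uE2 sE2 rE2]] := IHd s.+1.
  exists (map (cat (nseq l false)) E1 ++ map (cons true) E2); split.
  + have inj_zeros : injective (cat (nseq l false)).
      by move=> ? ? /eqP; rewrite eqseq_cat // => /andP [_ /eqP].
    rewrite cat_uniq !map_inj_uniq //; last by move=> ? ? [].
    rewrite uE1 uE2 /= andbT; apply/hasPn => _ /mapP [e _ ->].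
    by apply/mapP => -[e' _]; case: l l_gt0.
  + by rewrite size_cat !size_map sE1 sE2 /= add1n [in RHS]addSn binS addSnnS addnC.
  + move=> e; rewrite mem_cat => /orP [] /mapP [e' e'E ->].
      exact/reach_zeros_front/rE1.
    exact/reach_zeros_cons/rE2.
- have [E [uE sE rE]] := IHd s; exists (map (cons false) E); split.
  + by rewrite map_inj_uniq // => ? ? [].
  + by rewrite size_map sE.
  + by move=> _ /mapP [e eE ->]; apply/reach_zeros_cons/rE.
Qed.

End ZeroInsertion.

Section Differences.
Variables (T : eqType) (l : nat).

Definition diffs (y : seq T) : seq bool :=
  [seq z.1 != z.2 | z <- zip y (drop l y)].

Definition weight (y : seq T) : nat := count id (diffs y).

Lemma size_diffs y : size (diffs y) = size y - l.
Proof. by rewrite size_map size_zip size_drop; lia. Qed.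

Lemma diffs_tdup i x :
  i + l <= size x -> diffs (tdup l i x) = ins_zeros l i (diffs x).
Proof.
(* With x = u v w, |u| = i and |v| = l, the pairs (x_j, x_(j+l)) of u v v w
   are those of x with the l pairs (v_j, v_j) inserted after the first i. *)
move=> le_il; set u := take i x; set v := take l (drop i x).
set w := drop l (drop i x).
have size_u : size u = i by rewrite size_takel; lia.
have size_v : size v = l by rewrite size_takel // size_drop; lia.
set u' := drop l (u ++ v).
have size_u' : size u' = i by rewrite size_drop size_cat size_u size_v addnK.
have drop_uv s : drop l ((u ++ v) ++ s) = u' ++ s.
  rewrite drop_cat size_cat size_u size_v; case: ltnP => // le_li.
  by rewrite (_ : l - _ = 0) ?drop0 /u' ?drop_oversize // ?size_cat ?size_u ?size_v; lia.
have vw : v ++ w = drop i x by rewrite cat_take_drop.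
have x_uvw : x = u ++ v ++ w by rewrite vw cat_take_drop.
have t_uvvw : tdup l i x = u ++ v ++ v ++ w by rewrite vw.
have drop_x : drop l x = u' ++ w by rewrite x_uvw catA drop_uv.
have drop_t : drop l (tdup l i x) = u' ++ v ++ w by rewrite t_uvvw catA drop_uv.
rewrite /diffs drop_x drop_t t_uvvw {1}x_uvw !zip_cat ?size_u' // !map_cat /ins_zeros.
rewrite take_size_cat ?drop_size_cat ?size_map ?size_zip ?size_u ?size_u' ?minnn //.
by congr (_ ++ _ ++ _); rewrite -size_v; elim: (v) => //= a v' ->; rewrite eqxx.
Qed.

Lemma diffs_cons x0 a y :
  0 < l <= size y -> diffs (a :: y) = (a != nth x0 y l.-1) :: diffs y.
Proof.
case/andP=> l_gt0 le_ly.
by rewrite /diffs -[in drop l _](prednK l_gt0) /= (drop_nth x0) ?prednK.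
Qed.

Lemma weight_cons x0 a y :
  0 < l <= size y -> weight (a :: y) = (a != nth x0 y l.-1) + weight y.
Proof. by move=> le_ly; rewrite /weight (diffs_cons x0). Qed.

Lemma weight_short y : size y <= l -> weight y = 0.
Proof. by move=> le_yl; rewrite /weight /diffs drop_oversize //; case: y {le_yl}. Qed.

Lemma reach_zeros_lift s x e : l <= size x -> reach_zeros l s (diffs x) e ->
  exists y, [/\ diffs y = e, size y = size x + s * l & tball l s x y].
Proof.
move=> le_lx; elim: s e => [e -> | s IH e [e' [i [/IH [y [<- size_y ball_y]] le_i ->]]]].
  by exists x; rewrite addn0.
have le_il : i + l <= size y by move: le_i; rewrite size_diffs; lia.
exists (tdup l i y); split; first exact: diffs_tdup.
  by rewrite /tdup !size_cat !size_takel ?size_drop; lia.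
by right; exists y; split=> //; exists i.
Qed.

End Differences.

Lemma seq_preimage (A B : eqType) (f : A -> B) (P : A -> Prop) (E : seq B) :
  (forall e, e \in E -> exists2 a, f a = e & P a) ->
  exists2 s, map f s = E & forall a, a \in s -> P a.
Proof.
elim: E => [|e E IH] preE; first by exists [::].
have [a fa Pa] := preE e (mem_head e E).
have [|s fs Ps] := IH; first by move=> e' e'E; apply: preE; rewrite inE e'E orbT.
exists (a :: s) => [|a']; first by rewrite /= fa fs.
by rewrite inE => /predU1P [->|/Ps].
Qed.

Lemma ball_weight_set (T : finType) (n l t : nat) (x : n.-tuple T) :
  0 < l -> l <= n -> exists B : {set (n + t * l).-tuple T},
    #|B| = 'C(weight l x + t, t) /\
    forall y, y \in B -> tball l t x y /\ weight l y = weight l x.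
Proof.
move=> l_gt0 le_ln; have le_lx : l <= size x by rewrite size_tuple.
have [E [uniq_E size_E reach_E]] := reach_zeros_uniq_seq (diffs l x) t l_gt0.
have lift_E e : e \in E -> exists2 y : (n + t * l).-tuple T, diffs l y = e & tball l t x y.
  move=> /reach_E /(reach_zeros_lift le_lx) [y [diffs_y size_y ball_y]].
  have size_y' : size y == n + t * l by rewrite size_y size_tuple.
  by exists (Tuple size_y').
have [Y diffs_Y ball_Y] := seq_preimage lift_E.
have uniq_Y : uniq Y.
  by apply: (map_uniq (f := fun y : _.-tuple T => diffs l y)); rewrite diffs_Y.
exists [set y in Y]; split=> [|y].
  by rewrite cardsE (card_uniqP uniq_Y) -size_E -diffs_Y size_map.
rewrite inE => yY; split; first exact: ball_Y.
have : diffs l y \in E by rewrite -diffs_Y (map_f (fun y : _.-tuple T => diffs l y)).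
by move/reach_E/count_reach_zeros.
Qed.

Lemma mul_bin_shift m k t : 'C(m, k) * 'C(m + t, t) = 'C(m + t, k + t) * 'C(k + t, t).
Proof.
have [le_km | lt_mk] := leqP k m; last first.
  by rewrite (bin_small lt_mk) (@bin_small _ (k + t)) ?ltn_add2r.
have e_mt := bin_fact (leq_addl m t); rewrite addnK in e_mt.
have e_kt := bin_fact (leq_addl k t); rewrite addnK in e_kt.
have e_mk := bin_fact le_km.
have e_mtkt := bin_fact (leq_add le_km (leqnn t)); rewrite subnDr in e_mtkt.
apply/eqP; rewrite -(eqn_pmul2r (_ : 0 < t`! * k`! * (m - k)`!)) ?muln_gt0 ?fact_gt0 //.
apply/eqP; transitivity (m + t)`!.
  by rewrite -e_mt -e_mk; ring.
by rewrite -e_mtkt -e_kt; ring.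
Qed.

Lemma expn_le_ffact m t : m ^ t <= (m + t) ^_ t.
Proof.
elim: t => [|t IH] //; rewrite addnS ffactSS expnS leq_mul //; lia.
Qed.

Lemma sum_bin_tail q m t :
  (\sum_(k < m.+1) 'C(m + t, k + t) * q ^ k) * q ^ t <= q.+1 ^ (m + t).
Proof.
rewrite -[q.+1]add1n expnDn big_distrl -[(m + t).+1]addSn [m.+1 + t]addnC big_split_ord /=.
apply: leq_trans (leq_addl _ _); apply: leq_sum => k _.
by rewrite exp1n mul1n -mulnA -expnD [t + k]addnC.
Qed.

Local Open Scope ring_scope.

Lemma sum_tuple_cons (R : nmodType) (T : finType) n (G : n.+1.-tuple T -> R) :
  \sum_(u : n.+1.-tuple T) G u = \sum_(y : n.-tuple T) \sum_(a : T) G [tuple of a :: y].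
Proof.
rewrite exchange_big pair_big /=.
rewrite (reindex (fun z : T * n.-tuple T => [tuple of z.1 :: z.2])) //=.
exists (fun u => (thead u, [tuple of behead u])) => [[a y] _ | u _].
  by congr pair; apply: val_inj.
by case/tupleP: u => a y; apply: val_inj.
Qed.

Section WeightDistribution.
Variables (R : nmodType) (T : finType) (l : nat).
Hypothesis l_gt0 : (0 < l)%N.

Lemma sum_weight_cons (F : nat -> R) (y : seq T) : (l <= size y)%N ->
  \sum_(a : T) F (weight l (a :: y)) = F (weight l y) + F (weight l y).+1 *+ #|T|.-1.
Proof.
case: y => [|x0 y'] le_ly; first by case: l l_gt0 le_ly.
set y := x0 :: y'; set z := nth x0 y l.-1.
rewrite (bigD1 z) //= (weight_cons x0) ?l_gt0 // eqxx add0n; congr (_ + _).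
rewrite -(cardC1 z) -sumr_const; apply: eq_bigr => a a_z.
by rewrite (weight_cons x0) ?l_gt0 // a_z.
Qed.

Lemma sum_weight_tuple (F : nat -> R) m :
  \sum_(y : (m + l).-tuple T) F (weight l y) =
  \sum_(k < m.+1) F k *+ (#|T| ^ l * 'C(m, k) * #|T|.-1 ^ k).
Proof.
elim: m F => [|m IH] F.
  under eq_bigr => y _ do rewrite weight_short ?size_tuple //.
  by rewrite sumr_const big_ord1 /= bin0 !muln1 card_tuple.
rewrite sum_tuple_cons.
under eq_bigr => y _ do rewrite sum_weight_cons ?size_tuple ?leq_addl //.
set q := #|T|.-1.
have pascal k : (#|T| ^ l * 'C(m.+1, k.+1) * q ^ k.+1 =
    #|T| ^ l * 'C(m, k.+1) * q ^ k.+1 + #|T| ^ l * 'C(m, k) * q ^ k * q)%N.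
  by rewrite binS expnSr; ring.
rewrite big_split /= IH sumrMnl (IH (fun k => F k.+1)) -sumrMnl.
rewrite [RHS]big_ord_recl [in LHS]big_ord_recl /= !bin0 -addrA; congr (_ + _).
under [RHS]eq_bigr => k _ do rewrite /bump /= add1n pascal mulrnDr.
rewrite big_split /= [in RHS]big_ord_recr /= bin_small // muln0 mul0n mulr0n addr0.
by congr (_ + _); apply: eq_bigr => k _; rewrite /bump /= ?add1n -?mulrnA.
Qed.
End WeightDistribution.

Lemma ler_nat_frac (R : numFieldType) (a b c d : nat) :
  (0 < b)%N -> (0 < d)%N -> (a * d <= c * b)%N -> a%:R / b%:R <= c%:R / d%:R :> R.
Proof.
move=> b_gt0 d_gt0 le_ad_cb.
by rewrite ler_pdivrMr ?ltr0n // mulrAC ler_pdivlMr ?ltr0n // -!natrM ler_nat.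
Qed.

Lemma sum_inv_bin_le (R : numFieldType) (p l m t : nat) :
  (1 < p)%N -> (0 < m)%N ->
  \sum_(k < m.+1) ('C(k + t, t)%:R : R)^-1 *+ (p ^ l * 'C(m, k) * p.-1 ^ k) <=
    (t`!)%:R / (m ^ t)%:R * ((p ^ (l + m + t))%:R / (p.-1 ^ t)%:R).
Proof.
move=> p_gt1 m_gt0; set X := (\sum_(k < m.+1) 'C(m + t, k + t) * p.-1 ^ k)%N.
have bin_neq0 a b : ('C(a + b, b)%:R : R) != 0.
  by rewrite pnatr_eq0 -lt0n bin_gt0 leq_addl.
have -> : \sum_(k < m.+1) ('C(k + t, t)%:R : R)^-1 *+ (p ^ l * 'C(m, k) * p.-1 ^ k) =
    (p ^ l * X)%:R / 'C(m + t, t)%:R.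
  rewrite big_distrr natr_sum mulr_suml; apply: eq_bigr => k _.
  rewrite -[LHS]mulr_natr mulrC; apply/eqP; rewrite eqr_div // -!natrM eqr_nat.
  by rewrite /= mulnAC -(mulnA (p ^ l))%N mul_bin_shift; apply/eqP; ring.
have q_gt0 : (0 < p.-1)%N by lia.
rewrite mulf_div -!natrM; apply: ler_nat_frac.
- by rewrite bin_gt0 leq_addl.
- by rewrite muln_gt0 !expn_gt0 m_gt0 q_gt0.
- have le_fact := expn_le_ffact m t; rewrite -bin_ffact in le_fact.
  have le_sum := sum_bin_tail p.-1 m t; rewrite (prednK (ltnW p_gt1)) -/X in le_sum.
  have le := leq_mul (leq_mul (leqnn (p ^ l)) le_sum) le_fact.
  by apply: leq_trans (leq_trans _ le) _; apply: eq_leq; rewrite -?addnA ?expnD; ring.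
Qed.

Section DisjointBalls.
Variables (R : numFieldType) (T : finType) (n l t : nat) (C : {set n.-tuple T}).
Hypotheses (l_gt0 : (0 < l)%N) (le_ln : (l <= n)%N).
Hypothesis disjoint_balls : forall c c' : n.-tuple T, c \in C -> c' \in C -> c != c' ->
  forall y, ~ (tball l t (val c) y /\ tball l t (val c') y).

Lemma card_code_le_mass :
  #|C|%:R <= \sum_(y : (n + t * l).-tuple T) ('C(weight l y + t, t)%:R : R)^-1.
Proof.
pose mass (y : seq T) := ('C(weight l y + t, t)%:R : R)^-1.
have ball_set (c : n.-tuple T) := ball_weight_set t c l_gt0 le_ln.
(* Membership in a ball is not decidable as stated, so the sets are chosen
   classically. *)
pose B c := proj1_sig (constructive_indefinite_description _ (ball_set c)).
have B_spec c : #|B c| = 'C(weight l c + t, t) /\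
    forall y, y \in B c -> tball l t c y /\ weight l y = weight l c.
  exact: proj2_sig (constructive_indefinite_description _ (ball_set c)).
have mass_B c : \sum_(y in B c) mass y = 1.
  have [card_B in_B] := B_spec c.
  rewrite (eq_bigr (fun _ => mass c)) => [|y /in_B [_ w_y]]; last by rewrite /mass w_y.
  by rewrite sumr_const card_B -mulr_natr mulVf // pnatr_eq0 -lt0n bin_gt0 leq_addl.
have disjoint_B y c c' : c \in C -> c' \in C -> y \in B c -> y \in B c' -> c = c'.
  move=> cC c'C /(proj2 (B_spec c)) [ball_c _] /(proj2 (B_spec c')) [ball_c' _].
  apply/eqP; apply: contraT => neq_cc'.
  by case: (disjoint_balls cC c'C neq_cc' (conj ball_c ball_c')).
rewrite -sumr_const; under eq_bigr => c _ do rewrite -(mass_B c).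
rewrite (exchange_big_dep predT) //=; apply: ler_sum => y _.
rewrite sumr_const -[leRHS]mulr1n ler_wpMn2l ?invr_ge0 ?ler0n //.
by apply/card_le1_eqP => c c' /andP [cC yBc] /andP [c'C yBc']; apply: (disjoint_B y).
Qed.
End DisjointBalls.

Theorem lemma1 (p n l t : nat) (hp : (2 <= p)%N) (hn : (0 < n)%N)
  (hl : (0 < l)%N) (ht : (0 < t)%N) (C : {set n.-tuple 'I_p}) :
  tdup_correcting l t C ->
  (#|C|%:R : rat) <=
    ((t`!)%:R / ((n + (t - 1) * l) ^ t)%:R) *
    ((p ^ (n + t * (l + 1)))%:R / ((p - 1) ^ t)%:R).
Proof.
move=> correcting; set m := (n + (t - 1) * l)%N.
have m_gt0 : (0 < m)%N by rewrite addn_gt0 hn.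
have len_eq : (n + t * l = m + l)%N by rewrite /m -addnA -mulSnr subn1 prednK.
rewrite (_ : n + t * (l + 1) = l + m + t)%N ?subn1; last first.
  by rewrite mulnDr muln1 addnA len_eq (addnC m).
apply: le_trans (sum_inv_bin_le _ _ _ hp m_gt0).
have [le_ln | lt_nl] := leqP l n.
  have := @sum_weight_tuple rat 'I_p l hl (fun k => ('C(k + t, t)%:R)^-1) m.
  rewrite card_ord => <-; rewrite -len_eq; exact: card_code_le_mass hl le_ln correcting.
apply: le_trans (_ : (p ^ l)%:R <= _).
  rewrite ler_nat (leq_trans (max_card C)) // card_tuple card_ord leq_pexp2l //; lia.
rewrite big_ord_recl /= binn invr1 bin0 !muln1 lerDl sumr_ge0 // => k _.
by rewrite mulrn_wge0 // invr_ge0.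
Qed.
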